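(* Let $R$ be a commutative ring and let $a(x),b(x)\in R[[x]]$ be formal power series. For every integer $k\ge0$ with binary expansion $k=\sum_{j\ge0}d_j2^j$ ($d_j\in\{0,1\}$, almost all zero), set $$\dot f_k(x)=\prod_{j\ge0,\ d_j=1}\bigl(1-x^{2^j}\bigr),\qquad f_k(x)=\prod_{j\ge0,\ d_j=0}\bigl(1+x^{2^j}\bigr)\in R[[x]],\qquad \sigma_k=(-1)^{\sum_j d_j}.$$ Then $$a(x)\,b(x)=\sum_{k=0}^{\infty}f_k(x)\cdot\Bigl(\bigl(\sigma_k\,f_k(x)\,x^k\bigr)\odot\bigl(\dot f_k(x)\,a(x)\bigr)\odot\bigl(\dot f_k(x)\,b(x)\bigr)\Bigr).$$
   Context: For formal power series $P=\sum_i p_ix^i$ and $Q=\sum_i q_ix^i$, the termwise product is $P\odot Q=\sum_i p_iq_ix^i$. The infinite product defining $f_k$ converges in $R[[x]]$ (for $k=0$ it equals $\frac{1}{1-x}=\sum_{i\ge0}x^i$). In the formula, ordinary products are computed first, then the termwise products, and the result is multiplied (ordinary product) by $f_k(x)$; the infinite sum converges formally since the $k$-th summand has order at least $k$. *)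

From mathcomp Require Import all_boot all_order all_algebra.
Set Implicit Arguments. Unset Strict Implicit. Unset Printing Implicit Defensive.
Import GRing.Theory.
Local Open Scope ring_scope.

Section FPS.
Variable R : comPzRingType.

Definition fps := nat -> R.

Definition fps_mul (a b : fps) : fps :=
  fun n => \sum_(i < n.+1) a i * b (n - i)%N.
Definition fps_had (a b : fps) : fps := fun n => a n * b n.
Definition fps_one : fps := fun n => (n == 0)%:R.
Definition fps_Xn (m : nat) : fps := fun n => (n == m)%:R.
Definition fps_scale (c : R) (a : fps) : fps := fun n => c * a n.
Definition fps_1pXn (m : nat) : fps := fun n => (n == 0)%:R + (n == m)%:R.
Definition fps_1mXn (m : nat) : fps := fun n => (n == 0)%:R - (n == m)%:R.
Definition fps_prod (s : seq fps) : fps := foldr fps_mul fps_one s.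

Definition bit (k j : nat) : bool := odd (k %/ 2 ^ j).

(* \dot f_k = prod_{j, d_j = 1} (1 - x^(2^j)); all d_j with j > k vanish *)
Definition fdot (k : nat) : fps :=
  fps_prod [seq fps_1mXn (2 ^ j) | j <- iota 0 k.+1 & bit k j].

(* f_k = prod_{j, d_j = 0} (1 + x^(2^j)) (infinite product).  Its n-th
   coefficient is the (stable) n-th coefficient of the partial products:
   factors with j > n are = 1 modulo x^(n+1), so the partial product over
   j <= n already has the limiting n-th coefficient. *)
Definition f (k : nat) : fps :=
  fun n => fps_prod [seq fps_1pXn (2 ^ j) | j <- iota 0 n.+1 & ~~ bit k j] n.

Definition sigma (k : nat) : R :=
  (-1) ^+ (count (bit k) (iota 0 k.+1)).

(* formal (coefficientwise, x-adic) convergence of an infinite sum: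
   every coefficient of the partial sums is eventually equal to that of s *)
Definition fps_sums (T : nat -> fps) (s : fps) : Prop :=
  forall n, exists N, forall M, (N <= M)%N -> \sum_(k < M) T k n = s n.

Definition summand (a b : fps) (k : nat) : fps :=
  fps_mul (f k)
    (fps_had (fps_had (fps_scale (sigma k) (fps_mul (f k) (fps_Xn k)))
                      (fps_mul (fdot k) a))
             (fps_mul (fdot k) b)).

End FPS.

(* Split series by parity, a = a0(x^2) + x a1(x^2).  Doubling k shifts its
   binary digits, so f_{2k} = (1+x) f_k(x^2), f_{2k+1} = f_k(x^2),
   fdot_{2k} = fdot_k(x^2), fdot_{2k+1} = (1-x) fdot_k(x^2),
   sigma_{2k} = sigma_k and sigma_{2k+1} = -sigma_k.  Hence the summands of
   index 2k and 2k+1 for (a, b) are expressed, at x^2, through the summands of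
   index k for (a0, b0), (a1, b1) and (a1 - a0, b1 - b0).  The k-th summand
   has order at least k, so the n-th coefficient of the sum is a finite sum,
   and strong induction on n reduces the claim to
   a b = (a0 b0)(x^2) + x^2 (a1 b1)(x^2)
         + x (a0 b0 + a1 b1 - (a1 - a0) (b1 - b0))(x^2). *)

From mathcomp Require Import all_boot all_order all_algebra.
From mathcomp Require Import zify ring.
From Stdlib Require Import FunctionalExtensionality.
Set Implicit Arguments. Unset Strict Implicit. Unset Printing Implicit Defensive.
Import GRing.Theory.

Variant half_spec : nat -> Type :=
  | HalfDouble m : half_spec m.*2
  | HalfDoubleS m : half_spec m.*2.+1.

Lemma halfP n : half_spec n.
Proof. by rewrite -[n]odd_double_half; case: (odd n); constructor. Qed.

Lemma half_doubleS m : (m.*2.+1)./2 = m.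
Proof. by rewrite /= uphalf_double. Qed.

Lemma doubleS_eq_double m e : (m.*2.+1 == e.*2) = false.
Proof. by apply/negbTE/eqP => /(congr1 odd); rewrite /= !odd_double. Qed.

Lemma half_lt_exp2 m : m./2 < 2 ^ m.
Proof. by apply: leq_ltn_trans (ltn_expl m (ltnSn 1)); rewrite -divn2 leq_div. Qed.

Lemma lt_exp2S m : m < 2 ^ m.+1.
Proof. by apply: ltnW; apply: ltn_expl. Qed.

Lemma bit0 k : bit k 0 = odd k.
Proof. by rewrite /bit expn0 divn1. Qed.

Lemma bitS k j : bit k j.+1 = bit k./2 j.
Proof. by rewrite /bit expnS divnMA divn2. Qed.

Lemma bit_ge k j : k <= j -> bit k j = false.
Proof.
move=> le_kj; rewrite /bit divn_small //.
by apply: leq_trans (ltn_expl k (ltnSn 1)) _; rewrite leq_exp2l.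
Qed.

Lemma filter_iotaS (P : pred nat) n :
  [seq j <- iota 0 n.+1 | P j] =
  (if P 0 then cons 0 else id) (map succn [seq j <- iota 0 n | P j.+1]).
Proof.
have -> : iota 0 n.+1 = 0 :: map succn (iota 0 n) by rewrite /= (iotaDl 1 0).
by rewrite /= filter_map; case: (P 0).
Qed.

Definition one_bits k := [seq j <- iota 0 k | bit k j].

Lemma filter_bit_iota k n : k <= n -> [seq j <- iota 0 n | bit k j] = one_bits k.
Proof.
move=> le_kn; rewrite /one_bits -(subnKC le_kn) iotaD filter_cat add0n.
rewrite -[RHS]cats0 -(filter_pred0 (iota k (n - k))); congr (_ ++ _).
by apply: eq_in_filter => j; rewrite mem_iota => /andP[le_kj _]; rewrite bit_ge.
Qed.

Lemma one_bits_half k :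
  one_bits k = (if odd k then cons 0 else id) (map succn (one_bits k./2)).
Proof.
rewrite -(filter_bit_iota (leqnSn k)) filter_iotaS bit0.
under eq_filter do rewrite bitS.
by rewrite filter_bit_iota // -divn2 leq_div.
Qed.

Lemma one_bits_double k : one_bits k.*2 = map succn (one_bits k).
Proof. by rewrite one_bits_half odd_double half_double. Qed.

Lemma one_bits_doubleS k : one_bits k.*2.+1 = 0 :: map succn (one_bits k).
Proof. by rewrite one_bits_half /= odd_double uphalf_double. Qed.

Local Open Scope ring_scope.

Section ParitySums.
Variable V : nmodType.
Implicit Type F : nat -> V.

Lemma sum_ord_double F m :
  \sum_(i < m.*2) F i = \sum_(i < m) F i.*2 + \sum_(i < m) F i.*2.+1.
Proof.
elim: m => [|m IH]; first by rewrite !big_ord0 addr0.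
by rewrite doubleS !big_ord_recr /= IH addrACA addrA.
Qed.

Lemma sum_ord_doubleS F m :
  \sum_(i < m.*2.+1) F i = \sum_(i < m.+1) F i.*2 + \sum_(i < m) F i.*2.+1.
Proof. by rewrite big_ord_recr sum_ord_double big_ord_recr /= addrAC. Qed.

Lemma sum_ord_doubleSS F m :
  \sum_(i < m.*2.+2) F i = \sum_(i < m.+1) F i.*2 + \sum_(i < m.+1) F i.*2.+1.
Proof. by rewrite -doubleS sum_ord_double. Qed.

End ParitySums.

Section PowerSeries.
Variable R : comPzRingType.
Implicit Types (p q h a b : fps R).

Definition fps_even p : fps R := fun n => p n.*2.
Definition fps_odd p : fps R := fun n => p n.*2.+1.
Definition fps_sub p q : fps R := fun n => p n - q n.
Definition fps_subX2 p : fps R := fun n => if odd n then 0 else p n./2.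

Lemma sum_ord_natr_eq_mul (F : nat -> R) n e :
  \sum_(i < n) (i == e :> nat)%:R * F i = if (e < n)%N then F e else 0.
Proof.
elim: n => [|n IH]; first by rewrite big_ord0.
rewrite big_ord_recr /= IH ltnS.
by case: (ltngtP n e) => [||->]; rewrite ?ltnn ?mul0r ?addr0 ?mul1r ?add0r.
Qed.

Lemma fps_mulC p q : fps_mul p q = fps_mul q p.
Proof.
apply: functional_extensionality => n; rewrite /fps_mul (reindex_inj rev_ord_inj).
by apply: eq_bigr => i _; rewrite /= subKn 1?mulrC // -ltnS.
Qed.

Lemma fps_mul_Xnl e q n :
  fps_mul (fps_Xn R e) q n = if (e <= n)%N then q (n - e)%N else 0.
Proof. by rewrite /fps_mul (sum_ord_natr_eq_mul (fun i => q (n - i)%N)). Qed.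

Lemma fps_mul_1pXnl e q n :
  fps_mul (fps_1pXn R e) q n = q n + (if (e <= n)%N then q (n - e)%N else 0).
Proof.
rewrite /fps_mul; under eq_bigr do rewrite mulrDl.
by rewrite big_split -!/(fps_mul (fps_Xn R _) q n) !fps_mul_Xnl subn0.
Qed.

Lemma fps_mul_1mXnl e q n :
  fps_mul (fps_1mXn R e) q n = q n - (if (e <= n)%N then q (n - e)%N else 0).
Proof.
rewrite /fps_mul; under eq_bigr do rewrite mulrBl.
by rewrite sumrB -!/(fps_mul (fps_Xn R _) q n) !fps_mul_Xnl subn0.
Qed.

Lemma fps_mul_subr p q h n :
  fps_mul p (fps_sub q h) n = fps_mul p q n - fps_mul p h n.
Proof. by rewrite /fps_mul -sumrB; apply: eq_bigr => i _; rewrite mulrBr. Qed.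

Lemma fps_mul_double p q m :
  fps_mul p q m.*2 = \sum_(i < m.+1) p i.*2 * q (m - i).*2
                     + \sum_(i < m) p i.*2.+1 * q (m - i.+1).*2.+1.
Proof.
rewrite /fps_mul (sum_ord_doubleS (fun i => p i * q (m.*2 - i)%N)).
congr (_ + _); apply: eq_bigr => [[i /= lt_im]] _; congr (_ * q _); lia.
Qed.

Lemma fps_mul_doubleS p q m :
  fps_mul p q m.*2.+1 = \sum_(i < m.+1) p i.*2 * q (m - i).*2.+1
                        + \sum_(i < m.+1) p i.*2.+1 * q (m - i).*2.
Proof.
rewrite /fps_mul (sum_ord_doubleSS (fun i => p i * q (m.*2.+1 - i)%N)).
congr (_ + _); apply: eq_bigr => [[i /= lt_im]] _; congr (_ * q _); lia.
Qed.

Lemma fps_mul_subX2_double p h m :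
  fps_mul (fps_subX2 p) h m.*2 = fps_mul p (fps_even h) m.
Proof.
rewrite fps_mul_double [X in _ + X]big1 ?addr0 => [|i _]; last first.
  by rewrite /fps_subX2 /= odd_double mul0r.
by apply: eq_bigr => i _; rewrite /fps_subX2 odd_double half_double.
Qed.

Lemma fps_mul_subX2_doubleS p h m :
  fps_mul (fps_subX2 p) h m.*2.+1 = fps_mul p (fps_odd h) m.
Proof.
rewrite fps_mul_doubleS [X in _ + X]big1 ?addr0 => [|i _]; last first.
  by rewrite /fps_subX2 /= odd_double mul0r.
by apply: eq_bigr => i _; rewrite /fps_subX2 odd_double half_double.
Qed.

Lemma fps_subX2_mul p q :
  fps_subX2 (fps_mul p q) = fps_mul (fps_subX2 p) (fps_subX2 q).
Proof.
apply: functional_extensionality => n; case: (halfP n) => m.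
- rewrite fps_mul_subX2_double /fps_subX2 odd_double half_double.
  by congr (fps_mul p _ m); apply: functional_extensionality => i;
    rewrite /fps_even /fps_subX2 odd_double half_double.
- rewrite fps_mul_subX2_doubleS /fps_subX2 /= odd_double /=.
  by rewrite /fps_mul big1 // => i _; rewrite /fps_odd /= odd_double mulr0.
Qed.

Lemma fps_subX2_one : fps_subX2 (fps_one R) = fps_one R.
Proof.
apply: functional_extensionality => n; rewrite /fps_subX2 /fps_one.
by case: (halfP n) => m; rewrite /= odd_double ?half_double ?double_eq0.
Qed.

Lemma fps_subX2_1pXn e : fps_subX2 (fps_1pXn R e) = fps_1pXn R e.*2.
Proof.
apply: functional_extensionality => n; rewrite /fps_subX2 /fps_1pXn.
case: (halfP n) => m; rewrite /= odd_double /= ?half_double ?double_eq0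
  ?(inj_eq double_inj) //.
by rewrite doubleS_eq_double addr0.
Qed.

Lemma fps_subX2_1mXn e : fps_subX2 (fps_1mXn R e) = fps_1mXn R e.*2.
Proof.
apply: functional_extensionality => n; rewrite /fps_subX2 /fps_1mXn.
case: (halfP n) => m; rewrite /= odd_double /= ?half_double ?double_eq0
  ?(inj_eq double_inj) //.
by rewrite doubleS_eq_double subr0.
Qed.

Lemma fps_prod_pow2_succn (G : nat -> fps R) (s : seq nat) :
  (forall e, fps_subX2 (G e) = G e.*2) ->
  fps_prod [seq G (2 ^ j)%N | j <- map succn s]
  = fps_subX2 (fps_prod [seq G (2 ^ j)%N | j <- s]).
Proof.
move=> G_double; elim: s => [|j s IH] /=; first by rewrite fps_subX2_one.
by rewrite [in RHS]/fps_prod /= fps_subX2_mul G_double -IH expnS mul2n.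
Qed.

Lemma coef_1pX_subX2 p n : fps_mul (fps_1pXn R 1) (fps_subX2 p) n = p n./2.
Proof.
rewrite fps_mul_1pXnl /fps_subX2; case: (halfP n) => m.
  rewrite odd_double half_double; case: m => [|m]; first by rewrite addr0.
  by rewrite doubleS subn1 /= odd_double addr0.
by rewrite subn1 /= !odd_double half_double uphalf_double add0r.
Qed.

Lemma coef_1mX_subX2_double p m : fps_mul (fps_1mXn R 1) (fps_subX2 p) m.*2 = p m.
Proof.
rewrite fps_mul_1mXnl /fps_subX2 odd_double half_double; case: m => [|m].
  by rewrite subr0.
by rewrite doubleS subn1 /= odd_double subr0.
Qed.

Lemma coef_1mX_subX2_doubleS p m :
  fps_mul (fps_1mXn R 1) (fps_subX2 p) m.*2.+1 = - p m.
Proof.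
by rewrite fps_mul_1mXnl /fps_subX2 subn1 /= !odd_double half_double sub0r.
Qed.

Lemma fps_mul_1pX_subX2_double p h m :
  fps_mul (fps_mul (fps_1pXn R 1) (fps_subX2 p)) h m.+1.*2
  = fps_mul p (fps_even h) m.+1 + fps_mul p (fps_odd h) m.
Proof.
rewrite fps_mul_double; congr (_ + _); apply: eq_bigr => i _;
  rewrite coef_1pX_subX2 ?half_double ?half_doubleS //.
Qed.

Lemma fps_mul_1pX_subX2_doubleS p h m :
  fps_mul (fps_mul (fps_1pXn R 1) (fps_subX2 p)) h m.*2.+1
  = fps_mul p (fps_odd h) m + fps_mul p (fps_even h) m.
Proof.
rewrite fps_mul_doubleS; congr (_ + _); apply: eq_bigr => i _;
  rewrite coef_1pX_subX2 ?half_double ?half_doubleS //.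
Qed.

Lemma fps_mul_1mX_subX2_doubleS p h m :
  fps_mul (fps_mul (fps_1mXn R 1) (fps_subX2 p)) h m.*2.+1
  = fps_mul p (fps_sub (fps_odd h) (fps_even h)) m.
Proof.
rewrite fps_mul_doubleS fps_mul_subr -sumrN; congr (_ + _); apply: eq_bigr => i _.
  by rewrite coef_1mX_subX2_double.
by rewrite coef_1mX_subX2_doubleS mulNr.
Qed.

Lemma fdotE k : fdot R k = fps_prod [seq fps_1mXn R (2 ^ j)%N | j <- one_bits k].
Proof. by rewrite /fdot filter_bit_iota. Qed.

Lemma fdot_double k : fdot R k.*2 = fps_subX2 (fdot R k).
Proof.
by rewrite !fdotE one_bits_double fps_prod_pow2_succn //; apply: fps_subX2_1mXn.
Qed.

Lemma fdot_doubleS k :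
  fdot R k.*2.+1 = fps_mul (fps_1mXn R 1) (fps_subX2 (fdot R k)).
Proof.
by rewrite !fdotE one_bits_doubleS /= fps_prod_pow2_succn //; apply: fps_subX2_1mXn.
Qed.

Lemma sigmaE k : sigma R k = (-1) ^+ size (one_bits k).
Proof. by rewrite /sigma -size_filter filter_bit_iota. Qed.

Lemma sigma_double k : sigma R k.*2 = sigma R k.
Proof. by rewrite !sigmaE one_bits_double size_map. Qed.

Lemma sigma_doubleS k : sigma R k.*2.+1 = - sigma R k.
Proof. by rewrite !sigmaE one_bits_doubleS /= size_map exprS mulN1r. Qed.

Definition f_trunc k n : fps R :=
  fps_prod [seq fps_1pXn R (2 ^ j)%N | j <- iota 0 n & ~~ bit k j].

Lemma f_trunc_S k n :
  f_trunc k n.+1 = (if odd k then id else fps_mul (fps_1pXn R 1))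
                     (fps_subX2 (f_trunc k./2 n)).
Proof.
rewrite /f_trunc filter_iotaS bit0; under eq_filter do rewrite bitS.
by case: (odd k); rewrite /= fps_prod_pow2_succn //; apply: fps_subX2_1pXn.
Qed.

Lemma foldr_fps_mul_eq_upto m (s : seq (fps R)) p q :
  (forall i, (i <= m)%N -> p i = q i) ->
  forall i, (i <= m)%N -> foldr (@fps_mul R) p s i = foldr (@fps_mul R) q s i.
Proof.
move=> eq_pq; elim: s => [|r s IH] i le_im //=; first exact: eq_pq.
apply: eq_bigr => [[j /= lt_ji]] _; rewrite IH //; lia.
Qed.

Lemma fps_prod_1pXn_upto m (s : seq nat) :
  (forall j, j \in s -> (m < 2 ^ j)%N) ->
  forall i, (i <= m)%N -> fps_prod [seq fps_1pXn R (2 ^ j)%N | j <- s] i = fps_one R i.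
Proof.
elim: s => [|j s IH] //= high i le_im.
rewrite fps_mul_1pXnl IH // => [|l s_l]; last by apply: high; rewrite inE s_l orbT.
rewrite ifF ?addr0 //; apply/negbTE; rewrite -ltnNge.
exact: leq_ltn_trans le_im (high j (mem_head _ _)).
Qed.

Lemma f_trunc_stable k n1 n2 m :
  (n1 <= n2)%N -> (m < 2 ^ n1)%N -> f_trunc k n2 m = f_trunc k n1 m.
Proof.
move=> le_n12 lt_m; rewrite /f_trunc -(subnKC le_n12) iotaD add0n filter_cat map_cat.
rewrite /fps_prod foldr_cat; apply: (@foldr_fps_mul_eq_upto m) => // i le_im.
apply: (@fps_prod_1pXn_upto m) => // j.
rewrite mem_filter mem_iota => /andP[_ /andP[le_j _]].
by apply: leq_trans lt_m _; rewrite leq_exp2l.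
Qed.

Lemma f_truncE k n m : (m < 2 ^ n)%N -> f R k m = f_trunc k n m.
Proof.
move=> lt_mn; case: (leqP n m.+1) => [le_n|/ltnW le_n].
- exact: f_trunc_stable.
- by rewrite (f_trunc_stable _ le_n (lt_exp2S m)).
Qed.

Lemma f_coef0 k : f R k 0 = 1.
Proof. by rewrite (@f_truncE _ 0). Qed.

Lemma f_double k : f R k.*2 = fps_mul (fps_1pXn R 1) (fps_subX2 (f R k)).
Proof.
apply: functional_extensionality => m.
rewrite coef_1pX_subX2 (f_truncE _ (half_lt_exp2 m)) (f_truncE _ (lt_exp2S m)).
by rewrite f_trunc_S odd_double half_double coef_1pX_subX2.
Qed.

Lemma f_doubleS k : f R k.*2.+1 = fps_subX2 (f R k).
Proof.
apply: functional_extensionality => m.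
rewrite (f_truncE _ (lt_exp2S m)) f_trunc_S /= odd_double /= uphalf_double.
by rewrite /fps_subX2; case: (odd m) => //; rewrite (f_truncE _ (half_lt_exp2 m)).
Qed.

Local Notation fps_odd_sub_even a := (fps_sub (fps_odd a) (fps_even a)).

Definition summand_hadamard a b k : fps R :=
  fps_had (fps_had (fps_scale (sigma R k) (fps_mul (f R k) (fps_Xn R k)))
                   (fps_mul (fdot R k) a))
          (fps_mul (fdot R k) b).

Lemma summandE a b k : summand a b k = fps_mul (f R k) (summand_hadamard a b k).
Proof. by []. Qed.

Lemma f_mulXn k n :
  fps_mul (f R k) (fps_Xn R k) n = if (k <= n)%N then f R k (n - k)%N else 0.
Proof. by rewrite fps_mulC fps_mul_Xnl. Qed.

Lemma f_mulXn_double k n :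
  fps_mul (f R k.*2) (fps_Xn R k.*2) n = fps_mul (f R k) (fps_Xn R k) n./2.
Proof.
rewrite !f_mulXn geq_half_double f_double coef_1pX_subX2.
by case: leqP => // le_kn; congr (f R k _); lia.
Qed.

Lemma f_mulXn_doubleS k n :
  fps_mul (f R k.*2.+1) (fps_Xn R k.*2.+1) n =
  if odd n then fps_mul (f R k) (fps_Xn R k) n./2 else 0.
Proof.
rewrite !f_mulXn f_doubleS /fps_subX2; case: (halfP n) => m.
  by rewrite odd_double; case: leqP => // le_km; rewrite oddB // /= !odd_double.
rewrite /= odd_double /= uphalf_double ltnS leq_double subSS -doubleB.
rewrite odd_double half_double.
by case: leqP.
Qed.

Lemma summand_hadamard_double_double a b k m :
  summand_hadamard a b k.*2 m.*2 = summand_hadamard (fps_even a) (fps_even b) k m.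
Proof.
by rewrite /summand_hadamard /fps_had /fps_scale sigma_double f_mulXn_double
  half_double fdot_double !fps_mul_subX2_double.
Qed.

Lemma summand_hadamard_double_doubleS a b k m :
  summand_hadamard a b k.*2 m.*2.+1 = summand_hadamard (fps_odd a) (fps_odd b) k m.
Proof.
by rewrite /summand_hadamard /fps_had /fps_scale sigma_double f_mulXn_double
  half_doubleS fdot_double !fps_mul_subX2_doubleS.
Qed.

Lemma summand_hadamard_doubleS_double a b k m : summand_hadamard a b k.*2.+1 m.*2 = 0.
Proof.
by rewrite /summand_hadamard /fps_had /fps_scale f_mulXn_doubleS odd_double
  !mulr0 !mul0r.
Qed.

Lemma summand_hadamard_doubleS_doubleS a b k m :
  summand_hadamard a b k.*2.+1 m.*2.+1 =
  - summand_hadamard (fps_odd_sub_even a) (fps_odd_sub_even b) k m.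
Proof.
rewrite /summand_hadamard /fps_had /fps_scale sigma_doubleS f_mulXn_doubleS.
rewrite /= odd_double /=.
by rewrite uphalf_double fdot_doubleS !fps_mul_1mX_subX2_doubleS !mulNr.
Qed.

Lemma summand_double_double a b k m :
  summand a b k.*2 m.+1.*2 =
  summand (fps_even a) (fps_even b) k m.+1 + summand (fps_odd a) (fps_odd b) k m.
Proof.
rewrite summandE f_double fps_mul_1pX_subX2_double.
by congr (fps_mul _ _ _ + fps_mul _ _ _); apply: functional_extensionality => i;
  [exact: summand_hadamard_double_double | exact: summand_hadamard_double_doubleS].
Qed.

Lemma summand_double_doubleS a b k m :
  summand a b k.*2 m.*2.+1 =
  summand (fps_odd a) (fps_odd b) k m + summand (fps_even a) (fps_even b) k m.
Proof.
rewrite summandE f_double fps_mul_1pX_subX2_doubleS.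
by congr (fps_mul _ _ _ + fps_mul _ _ _); apply: functional_extensionality => i;
  [exact: summand_hadamard_double_doubleS | exact: summand_hadamard_double_double].
Qed.

Lemma summand_doubleS_double a b k m : summand a b k.*2.+1 m.*2 = 0.
Proof.
rewrite summandE f_doubleS fps_mul_subX2_double /fps_mul big1 // => i _.
by rewrite /fps_even summand_hadamard_doubleS_double mulr0.
Qed.

Lemma summand_doubleS_doubleS a b k m :
  summand a b k.*2.+1 m.*2.+1 =
  - summand (fps_odd_sub_even a) (fps_odd_sub_even b) k m.
Proof.
rewrite summandE f_doubleS fps_mul_subX2_doubleS /fps_mul -sumrN.
by apply: eq_bigr => i _; rewrite /fps_odd summand_hadamard_doubleS_doubleS mulrN.
Qed.

Lemma summand_eq0 a b k n : (n < k)%N -> summand a b k n = 0.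
Proof.
move=> lt_nk; rewrite summandE /fps_mul big1 // => i _.
rewrite /summand_hadamard /fps_had /fps_scale f_mulXn ifF; last by lia.
by rewrite mulr0 !mul0r mulr0.
Qed.

Definition summands_coef a b n := \sum_(k < n.+1) summand a b k n.

Lemma sum_summands_coef a b n K :
  (n < K)%N -> \sum_(k < K) summand a b k n = summands_coef a b n.
Proof.
move=> lt_nK; rewrite /summands_coef -(subnKC lt_nK) big_split_ord /=.
by rewrite [X in _ + X]big1 ?addr0 // => k _; rewrite summand_eq0 // ltn_addr.
Qed.

Lemma summands_coef0 a b : summands_coef a b 0 = fps_mul a b 0.
Proof.
rewrite /summands_coef big_ord1 summandE /fps_mul !big_ord1 f_coef0 mul1r.
rewrite /summand_hadamard /fps_had /fps_scale f_mulXn /= f_coef0.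
by rewrite /sigma /= expr0 /fdot /= /fps_mul !big_ord1 /fps_one /= !mul1r.
Qed.

Lemma summands_coef_double a b m :
  summands_coef a b m.+1.*2 =
  summands_coef (fps_even a) (fps_even b) m.+1 + summands_coef (fps_odd a) (fps_odd b) m.
Proof.
rewrite -(@sum_summands_coef _ _ _ m.+2.*2) ?ltn_double //.
rewrite (sum_ord_double (fun k => summand a b k m.+1.*2)).
rewrite [X in _ + X]big1 ?addr0 => [|k _]; last exact: summand_doubleS_double.
under eq_bigr do rewrite summand_double_double.
by rewrite big_split !sum_summands_coef.
Qed.

Lemma summands_coef_doubleS a b m :
  summands_coef a b m.*2.+1 =
  summands_coef (fps_odd a) (fps_odd b) m + summands_coef (fps_even a) (fps_even b) m
  - summands_coef (fps_odd_sub_even a) (fps_odd_sub_even b) m.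
Proof.
rewrite -(@sum_summands_coef _ _ _ m.+1.*2) //.
rewrite (sum_ord_double (fun k => summand a b k m.*2.+1)).
under eq_bigr do rewrite summand_double_doubleS.
under [X in _ + X]eq_bigr do rewrite summand_doubleS_doubleS.
by rewrite sumrN big_split !sum_summands_coef.
Qed.

Lemma fps_mul_coef_double a b m :
  fps_mul a b m.+1.*2 =
  fps_mul (fps_even a) (fps_even b) m.+1 + fps_mul (fps_odd a) (fps_odd b) m.
Proof. by rewrite fps_mul_double. Qed.

Lemma fps_mul_coef_doubleS a b m :
  fps_mul a b m.*2.+1 =
  fps_mul (fps_odd a) (fps_odd b) m + fps_mul (fps_even a) (fps_even b) m
  - fps_mul (fps_odd_sub_even a) (fps_odd_sub_even b) m.
Proof.
rewrite fps_mul_doubleS /fps_mul -!big_split -sumrB /=; apply: eq_bigr => i _.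
by rewrite /fps_sub /fps_even /fps_odd; ring.
Qed.

Lemma summands_coefE a b n : summands_coef a b n = fps_mul a b n.
Proof.
elim/ltn_ind: n a b => n IH a b; case: (halfP n) IH => [[|m]|m] IH.
- exact: summands_coef0.
- by rewrite summands_coef_double fps_mul_coef_double !IH //; lia.
- by rewrite summands_coef_doubleS fps_mul_coef_doubleS !IH //; lia.
Qed.

End PowerSeries.

Unset Implicit Arguments.

Theorem mainTheorem4 (R : comPzRingType) (a b : fps R) :
  fps_sums (summand a b) (fps_mul a b).
Proof.
move=> n; exists n.+1 => M lt_nM.
by rewrite sum_summands_coef // summands_coefE.
Qed.
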